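(* Let $0\le b\le 1$ and $0\le\alpha<1$, and let $r_0=r_0(\alpha)$ be the real root in $(0,1)$ of the equation \[1-\alpha+(1+\alpha)r=2\big(1-\alpha+(2-\alpha)(1-b)r\big)(1-r)^3.\] Let $\mathcal{F}$ be the class of functions $f\in\mathcal{A}_b$, $f(z)=z+\sum_{n\ge2}a_nz^n$, with $|a_n|\le n$ for all $n\ge3$. Then: (i) every $f\in\mathcal{F}$ satisfies $\left|\frac{zf'(z)}{f(z)}-1\right|\le 1-\alpha$ for $|z|\le r_0$; (ii) $r_0(\alpha)$ is the radius of starlikeness of order $\alpha$ of $\mathcal{F}$; (iii) $r_0(1/2)$ is the radius of parabolic starlikeness of $\mathcal{F}$. All results are sharp: the function $f_0(z)=2z+2(1-b)z^2-\frac{z}{(1-z)^2}=z-2bz^2-\sum_{n\ge3}nz^n$ belongs to $\mathcal{F}$ and satisfies $\left|\frac{zf_0'(z)}{f_0(z)}-1\right|=1-\alpha$ and $\operatorname{Re}\frac{zf_0'(z)}{f_0(z)}=\alpha$ at $z=r_0$.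
   Context: $\mathbb{D}=\{z\in\mathbb{C}:|z|<1\}$. For $0\le b\le1$, $\mathcal{A}_b$ is the class of analytic functions $f$ on $\mathbb{D}$ of the form $f(z)=z+a_2z^2+a_3z^3+\cdots$ with $|a_2|=2b$. For a class $\mathcal{F}$ of analytic functions on $\mathbb{D}$ normalized by $f(0)=0$, $f'(0)=1$, and $0\le\alpha<1$, the radius of starlikeness of order $\alpha$ of $\mathcal{F}$ is the supremum of $r\in(0,1]$ such that every $f\in\mathcal{F}$ satisfies $f(z)\ne0$ for $0<|z|<r$ and $\operatorname{Re}\big(zf'(z)/f(z)\big)>\alpha$ for $|z|<r$ (the quotient being $1$ at $z=0$). The radius of parabolic starlikeness of $\mathcal{F}$ is the supremum of $r\in(0,1]$ such that every $f\in\mathcal{F}$ satisfies $\operatorname{Re}\big(zf'(z)/f(z)\big)>\left|zf'(z)/f(z)-1\right|$ for $|z|<r$. *)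

From Stdlib Require Import Reals.
From Coquelicot Require Import Coquelicot.
Open Scope R_scope.

Definition coeffs_Ab (b : R) (f : C -> C) (a : nat -> C) : Prop :=
  a 0%nat = 0%C /\ a 1%nat = 1%C /\ Cmod (a 2%nat) = 2 * b /\
  forall z : C, Cmod z < 1 -> is_pseries (K:=C_AbsRing) (V:=C_NormedModule) a z (f z).

Definition in_Ab (b : R) (f : C -> C) : Prop := exists a, coeffs_Ab b f a.

Definition in_F (b : R) (f : C -> C) : Prop :=
  exists a, coeffs_Ab b f a /\ forall n : nat, (3 <= n)%nat -> Cmod (a n) <= INR n.

(* w is the value of z f'(z) / f(z) when d = f'(z); by convention it is 1 at z = 0 *)
Definition logquot (f : C -> C) (z d w : C) : Prop :=
  (z = 0%C /\ w = 1%C) \/ (z <> 0%C /\ w = (z * d / f z)%C).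

Definition starlike_order_on (b alpha r : R) : Prop :=
  forall f, in_F b f ->
    (forall z : C, 0 < Cmod z < r -> f z <> 0%C) /\
    (forall z d w : C, Cmod z < r ->
       is_derive (K:=C_AbsRing) (V:=C_NormedModule) f z d ->
       logquot f z d w -> alpha < Re w).

Definition parabolic_on (b r : R) : Prop :=
  forall f, in_F b f ->
    forall z d w : C, Cmod z < r ->
       is_derive (K:=C_AbsRing) (V:=C_NormedModule) f z d ->
       logquot f z d w -> Cmod (w - 1)%C < Re w.

Definition radius_starlike (b alpha rho : R) : Prop :=
  is_lub (fun r => 0 < r <= 1 /\ starlike_order_on b alpha r) rho.

Definition radius_parabolic (b rho : R) : Prop :=
  is_lub (fun r => 0 < r <= 1 /\ parabolic_on b r) rho.

Definition f0 (b : R) (z : C) : C :=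
  (2 * z + 2 * (1 - b) * z * z - z / ((1 - z) * (1 - z)))%C.

Definition r0_eq (b alpha r : R) : Prop :=
  1 - alpha + (1 + alpha) * r = 2 * (1 - alpha + (2 - alpha) * (1 - b) * r) * (1 - r) ^ 3.

From Stdlib Require Import Reals Lra Lia Psatz.
From Coquelicot Require Import Coquelicot.
Open Scope R_scope.

(* For |z| = r the coefficient bounds give |f(z)| >= den_bound b r and
   |z f'(z) - f(z)| <= num_bound b r.  The second estimate avoids termwise
   differentiation: the coefficients of f((1+t)z) - (1+t) f(z) are
   a_n z^n ((1+t)^n - (1+t)), which the coefficient bounds control, and dividing
   by t and letting t -> 0 gives z f'(z) - f(z).  The inequality
   num_bound <= (1 - alpha) den_bound is equivalent to r0_poly(r) <= 0, which
   holds exactly up to r0 because r0_poly is increasing on [0, 1].  The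
   coefficients of f0 are extremal, so f0 attains both estimates at z = r0, where
   z f0'(z) / f0(z) = alpha; this gives sharpness and the upper bounds for both
   radii. *)

Lemma is_series_of_error_bound {K : AbsRing} {V : NormedModule K}
  (u : nat -> V) (l : V) (E : nat -> R) :
  (forall N, norm (minus (sum_n u N) l) <= E N) -> is_lim_seq E 0 -> is_series u l.
Proof.
  intros HE HE0. apply is_lim_seq_spec in HE0.
  apply filterlim_locally. intros eps.
  destruct (HE0 eps) as [N HN]. exists N. intros n Hn.
  apply norm_compat1.
  specialize (HN n Hn). rewrite Rminus_0_r in HN. apply Rabs_lt_between in HN.
  specialize (HE n). lra.
Qed.

Lemma is_series_finite {K : AbsRing} {V : NormedModule K} (u : nat -> V) m :
  (forall k, (m < k)%nat -> u k = zero) -> is_series u (sum_n u m).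
Proof.
  intros Hu. apply filterlim_locally. intros eps. exists m. intros n Hn.
  replace (sum_n u n) with (sum_n u m); [apply ball_center|].
  induction Hn as [|n Hn IH]; [reflexivity|].
  rewrite sum_Sn, <- IH, Hu by lia. symmetry. apply plus_zero_r.
Qed.

Lemma is_series_norm_le {K : AbsRing} {V : NormedModule K}
  (u : nat -> V) (v : nat -> R) lu lv :
  is_series u lu -> is_series v lv -> (forall k, norm (u k) <= v k) -> norm lu <= lv.
Proof.
  intros Hu Hv Huv.
  assert (Hpartial : forall N, norm (sum_n u N) <= sum_n v N).
  { induction N as [|N IH].
    - rewrite !sum_O. apply Huv.
    - rewrite !sum_Sn. eapply Rle_trans; [apply norm_triangle|].
      apply Rplus_le_compat; [exact IH|apply Huv]. }
  assert (Hnorm : is_lim_seq (fun N => norm (sum_n u N)) (norm lu)).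
  { eapply filterlim_comp; [exact Hu|apply filterlim_norm]. }
  exact (is_lim_seq_le _ _ (Finite _) (Finite _) Hpartial Hnorm Hv).
Qed.

Lemma is_series_tail {K : AbsRing} {V : NormedModule K} (u : nat -> V) l m :
  is_series u l -> is_series (fun k => u (S m + k)%nat) (minus l (sum_n u m)).
Proof.
  intros Hu. apply is_series_incr_n; [lia|].
  change (Init.Nat.pred (S m)) with m.
  unfold minus.
  rewrite <- plus_assoc, (plus_opp_l (G := NormedModule.AbelianGroup K V)), plus_zero_r.
  exact Hu.
Qed.

Lemma is_series_tail_norm_le {K : AbsRing} {V : NormedModule K}
  (u : nat -> V) (v : nat -> R) lu lv m :
  is_series u lu -> is_series v lv -> (forall k, (m < k)%nat -> norm (u k) <= v k) ->
  norm (minus lu (sum_n u m)) <= lv - sum_n v m.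
Proof.
  intros Hu Hv Huv.
  apply (is_series_norm_le _ _ _ _ (is_series_tail u lu m Hu) (is_series_tail v lv m Hv)).
  intros k. apply Huv. lia.
Qed.

Lemma is_lim_seq_INR_mult_pow q : 0 <= q < 1 -> is_lim_seq (fun n => INR n * q ^ n) 0.
Proof.
  intros Hq. destruct (Req_dec q 0) as [->|Hq0].
  - apply is_lim_seq_incr_1. apply is_lim_seq_ext with (fun _ => 0); [|apply is_lim_seq_const].
    intros n. simpl. ring.
  - set (u n := INR (S n) * q ^ n).
    assert (Hu0 : forall n, u n <> 0).
    { intros n. apply Rmult_integral_contrapositive.
      split; [apply not_0_INR; lia|apply pow_nonzero; exact Hq0]. }
    assert (Hratio : is_lim_seq (fun n => Rabs (u (S n) / u n)) q).
    { apply is_lim_seq_ext with (fun n => q + q * / INR (S n)).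
      - intros n. unfold u. rewrite Rabs_pos_eq, !S_INR.
        + simpl. field. split; [apply pow_nonzero; exact Hq0|pose proof (pos_INR n); lra].
        + apply Rmult_le_pos; [apply Rmult_le_pos; [apply pos_INR|apply pow_le; lra]|].
          apply Rlt_le, Rinv_0_lt_compat, Rmult_lt_0_compat; [apply lt_0_INR; lia|].
          apply pow_lt. lra.
      - assert (Hinv : is_lim_seq (fun n => / INR (S n)) 0).
        { apply (is_lim_seq_inv _ p_infty); [|discriminate].
          apply (is_lim_seq_incr_1 INR). apply is_lim_seq_INR. }
        pose proof (is_lim_seq_scal_l _ q _ Hinv) as Hqinv. simpl in Hqinv.
        replace q with (q + q * 0) at 1 by ring.
        apply is_lim_seq_plus'; [apply is_lim_seq_const|exact Hqinv]. }
    apply is_lim_seq_incr_1.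
    apply is_lim_seq_le_le with (fun _ => 0) (fun n => Rabs (u n)).
    + intros n. unfold u. rewrite Rabs_pos_eq.
      * pose proof (pow_le q n (proj1 Hq)). change (q ^ S n) with (q * q ^ n). split.
        -- apply Rmult_le_pos; [apply pos_INR|apply Rmult_le_pos; lra].
        -- apply Rmult_le_compat_l; [apply pos_INR|nra].
      * apply Rmult_le_pos; [apply pos_INR|apply pow_le; lra].
    + apply is_lim_seq_const.
    + apply ex_series_lim_0, (ex_series_DAlembert u q); [lra|exact Hu0|exact Hratio].
Qed.

Lemma pow_n_C (z : C) k : pow_n (K := C_AbsRing) z k = (z ^ k)%C.
Proof. induction k as [|k IH]; [reflexivity|]. simpl. rewrite IH. reflexivity. Qed.

Lemma Cmod_1_sub_ge (z : C) : 1 - Cmod z <= Cmod (1 - z).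
Proof.
  pose proof (Cmod_triangle (1 - z) z) as H.
  replace (1 - z + z)%C with (RtoC 1) in H by ring. rewrite Cmod_1 in H. lra.
Qed.

Lemma sum_n_kpow_closed (z : C) N :
  ((1 - z) * (1 - z) * sum_n (fun k => z ^ k * INR k) N =
   z - INR (S N) * z ^ S N + INR N * z ^ S (S N))%C.
Proof.
  induction N as [|N IH].
  - rewrite sum_O. simpl. ring.
  - rewrite sum_Sn. change plus with Cplus.
    rewrite Cmult_plus_distr_l, IH, !S_INR, !RtoC_plus. simpl. ring.
Qed.

Lemma is_series_kpow_C (z : C) : Cmod z < 1 ->
  is_series (K := C_AbsRing) (V := C_NormedModule) (fun k => z ^ k * INR k)%C
    (z / ((1 - z) * (1 - z)))%C.
Proof.
  intros Hz. set (r := Cmod z).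
  assert (Hr : 0 <= r < 1) by (split; [apply Cmod_ge_0|exact Hz]).
  assert (H1z : 0 < Cmod (1 - z)) by (pose proof (Cmod_1_sub_ge z); fold r; lra).
  assert (H1z0 : (1 - z)%C <> 0%C) by (intros E; rewrite E, Cmod_0 in H1z; lra).
  assert (Hden : ((1 - z) * (1 - z))%C <> 0%C) by (apply Cmult_neq_0; exact H1z0).
  apply is_series_of_error_bound with
    (E := fun N => (INR (S N) * r ^ S N + INR N * r ^ N) / (1 - r) ^ 2).
  - intros N.
    change (Cmod (sum_n (fun k => z ^ k * INR k)%C N - z / ((1 - z) * (1 - z)))
      <= (INR (S N) * r ^ S N + INR N * r ^ N) / (1 - r) ^ 2).
    replace (sum_n (fun k => z ^ k * INR k)%C N - z / ((1 - z) * (1 - z)))%C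
      with ((- INR (S N) * z ^ S N + INR N * z ^ S (S N)) / ((1 - z) * (1 - z)))%C.
    2: { pose proof (sum_n_kpow_closed z N) as HS.
         set (s := sum_n _ N) in *.
         replace s with ((1 - z) * (1 - z) * s / ((1 - z) * (1 - z)))%C at 1
           by (field; exact H1z0).
         rewrite HS. field. exact H1z0. }
    rewrite Cmod_div by exact Hden. unfold Rdiv.
    apply Rmult_le_compat.
    + apply Cmod_ge_0.
    + rewrite Cmod_mult. apply Rlt_le, Rinv_0_lt_compat, Rmult_lt_0_compat; assumption.
    + eapply Rle_trans; [apply Cmod_triangle|].
      rewrite !Cmod_mult, !Cmod_pow, Cmod_opp, !Cmod_R, !Rabs_pos_eq by apply pos_INR.
      fold r. apply Rplus_le_compat_l, Rmult_le_compat_l; [apply pos_INR|].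
      pose proof (pow_le r N (proj1 Hr)). change (r ^ S (S N)) with (r * (r * r ^ N)).
      assert (r * r <= 1) by nra. nra.
    + rewrite Cmod_mult. pose proof (Cmod_1_sub_ge z) as H1.
      apply Rinv_le_contravar; [apply pow_lt; lra|]. fold r in H1. nra.
  - replace 0 with ((0 + 0) / (1 - r) ^ 2) by (field; nra).
    apply is_lim_seq_div'; [|apply is_lim_seq_const|nra].
    apply is_lim_seq_plus'; [|apply is_lim_seq_INR_mult_pow; lra].
    apply (is_lim_seq_incr_1 (fun n => INR n * r ^ n)). apply is_lim_seq_INR_mult_pow. lra.
Qed.

Lemma is_series_of_RtoC (u : nat -> R) (l : R) :
  is_series (K := C_AbsRing) (V := C_NormedModule) (fun k => RtoC (u k)) (RtoC l) ->
  is_series u l.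
Proof.
  intros Hu. apply filterlim_locally. intros eps.
  destruct (proj1 (filterlim_locally _ _) Hu eps) as [N HN].
  exists N. intros n Hn. specialize (HN n Hn).
  assert (Hsum : forall m, sum_n (fun k => RtoC (u k)) m = RtoC (sum_n u m)).
  { induction m as [|m IH]; [rewrite !sum_O; reflexivity|].
    rewrite !sum_Sn, IH. exact (eq_sym (RtoC_plus _ _)). }
  rewrite Hsum in HN. destruct HN as [Hre _]. exact Hre.
Qed.

Lemma is_series_kpow_R (s : R) : 0 <= s < 1 ->
  is_series (fun k => INR k * s ^ k) (s / (1 - s) ^ 2).
Proof.
  intros Hs. apply is_series_of_RtoC.
  assert (Hz : Cmod s < 1) by (rewrite Cmod_R, Rabs_pos_eq; lra).
  eapply is_series_ext; [|replace (RtoC (s / (1 - s) ^ 2)) with (s / ((1 - s) * (1 - s)))%C;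
                           [exact (is_series_kpow_C s Hz)|]].
  - intros k. simpl. rewrite <- RtoC_pow, <- RtoC_mult. f_equal. ring.
  - rewrite <- RtoC_minus, <- RtoC_mult, <- RtoC_div.
    + f_equal. simpl. field. lra.
    + apply Rmult_integral_contrapositive. split; lra.
Qed.

Lemma is_derive_C_along_ray (f : C -> C) (z d : C) :
  is_derive (K := C_AbsRing) (V := C_NormedModule) f z d ->
  forall eps, 0 < eps -> exists del, 0 < del /\ forall t, 0 < t < del ->
    Cmod (f (RtoC (1 + t) * z) - f z - RtoC t * z * d)%C <= eps * t.
Proof.
  intros [_ Hd] eps Heps. set (r := Cmod z).
  assert (Hr : 0 <= r) by apply Cmod_ge_0.
  assert (Heps' : 0 < eps / (r + 1)) by (apply Rdiv_lt_0_compat; lra).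
  destruct (Hd z (fun P HP => HP) (mkposreal _ Heps')) as [del Hdel].
  assert (Hdel0 : 0 < del) by apply cond_pos.
  exists (del / (r + 1)). split; [apply Rdiv_lt_0_compat; lra|]. intros t [Ht0 Ht].
  set (y := (RtoC (1 + t) * z)%C).
  assert (Hyz : (y - z = RtoC t * z)%C) by (unfold y; rewrite RtoC_plus; ring).
  assert (Hyz_norm : Cmod (y - z) = t * r)
    by (rewrite Hyz, Cmod_mult, Cmod_R, Rabs_pos_eq; [reflexivity|lra]).
  assert (Htr : t * (r + 1) < del).
  { apply (Rmult_lt_compat_r (r + 1)) in Ht; [|lra].
    replace (del / (r + 1) * (r + 1)) with (pos del) in Ht by (field; lra). exact Ht. }
  assert (Happrox : Cmod (f y - f z - (y - z) * d)%C <= eps / (r + 1) * Cmod (y - z)).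
  { apply Hdel. apply (norm_compat1 (V := AbsRing_NormedModule C_AbsRing)).
    change (Cmod (y - z) < del). rewrite Hyz_norm. nra. }
  rewrite Hyz_norm, Hyz in Happrox.
  eapply Rle_trans; [exact Happrox|].
  replace (eps / (r + 1) * (t * r)) with (eps * t * (r / (r + 1))) by (field; lra).
  rewrite <- (Rmult_1_r (eps * t)) at 2. apply Rmult_le_compat_l; [nra|].
  apply Rle_div_l; lra.
Qed.

Lemma Cmod_derive_ray_le (f : C -> C) (z d : C) (g : R -> R) (t0 : R) :
  0 < t0 -> is_derive (K := C_AbsRing) (V := C_NormedModule) f z d -> continuity_pt g 0 ->
  (forall t, 0 < t < t0 -> Cmod (f (RtoC (1 + t) * z) - RtoC (1 + t) * f z)%C <= t * g t) ->
  Cmod (z * d - f z)%C <= g 0.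
Proof.
  intros Ht0 Hd Hg Hray. apply Rle_plus_epsilon. intros e He.
  destruct (is_derive_C_along_ray f z d Hd (e / 2) ltac:(lra)) as [del1 [Hdel1 Happrox]].
  destruct (proj1 (continuity_pt_locally g 0) Hg (mkposreal (e / 2) ltac:(lra)))
    as [del2 Hcont].
  assert (Hdel2 : 0 < del2) by apply cond_pos.
  set (t := Rmin t0 (Rmin del1 del2) / 2).
  assert (Ht : 0 < t /\ t < t0 /\ t < del1 /\ t < del2).
  { pose proof (Rmin_l t0 (Rmin del1 del2)). pose proof (Rmin_r t0 (Rmin del1 del2)).
    pose proof (Rmin_l del1 del2). pose proof (Rmin_r del1 del2).
    assert (0 < Rmin t0 (Rmin del1 del2)) by (repeat apply Rmin_pos; lra).
    unfold t. lra. }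
  destruct Ht as [Htpos [Htt0 [Htdel1 Htdel2]]]. clearbody t.
  assert (Hgt : g t < g 0 + e / 2).
  { assert (Hball : ball 0 del2 t).
    { apply (norm_compat1 (V := R_NormedModule)).
      change (Rabs (t - 0) < del2). rewrite Rminus_0_r, Rabs_pos_eq; lra. }
    specialize (Hcont t Hball). simpl in Hcont. apply Rabs_lt_between' in Hcont. lra. }
  assert (Hbound : t * Cmod (z * d - f z)%C <= t * g t + e / 2 * t).
  { rewrite <- (Rabs_pos_eq t) at 1 by lra. rewrite <- Cmod_R, <- Cmod_mult.
    replace (RtoC t * (z * d - f z))%C
      with ((f (RtoC (1 + t) * z) - RtoC (1 + t) * f z)
            - (f (RtoC (1 + t) * z) - f z - RtoC t * z * d))%C
      by (rewrite RtoC_plus; ring).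
    eapply Rle_trans; [apply Cmod_triangle|]. rewrite Cmod_opp.
    apply Rplus_le_compat; [apply Hray|apply Happrox]; lra. }
  apply (Rmult_le_reg_l t); [exact Htpos|]. nra.
Qed.

(* Sum of [n s^n] over [n >= 3]. *)
Definition kpow_tail (s : R) : R := s / (1 - s) ^ 2 - s - 2 * s ^ 2.

(* [t * ray_majorant b r t] majorizes [|f((1+t)z) - (1+t)f(z)|] on [|z| = r]. *)
Definition ray_majorant (b r t : R) : R :=
  2 * b * r ^ 2 * (1 + t)
  + (1 + t) * r ^ 2 * (2 - 2 * r - t * r) / ((1 - r - t * r) ^ 2 * (1 - r) ^ 2)
  - 2 * r ^ 2 * (1 + t).

Definition ray_weight (t : R) (k : nat) : R := (1 + t) ^ k - (1 + t).

Lemma ray_weight_nonneg t k : 0 <= t -> (1 <= k)%nat -> 0 <= ray_weight t k.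
Proof.
  intros Ht Hk. unfold ray_weight. rewrite <- (pow_1 (1 + t)) at 2.
  apply Rge_le, Rge_minus, Rle_ge, Rle_pow; [lra|exact Hk].
Qed.

Lemma is_series_kpow_ray r t : 0 <= r -> 0 <= t -> (1 + t) * r < 1 ->
  is_series (fun k => INR k * r ^ k * ray_weight t k)
    ((1 + t) * r / (1 - (1 + t) * r) ^ 2 - (1 + t) * (r / (1 - r) ^ 2)).
Proof.
  intros Hr Ht Htr.
  eapply is_series_ext; [|exact (is_series_minus _ _ _ _ (is_series_kpow_R ((1 + t) * r) ltac:(nra))
                                   (is_series_scal (1 + t) _ _ (is_series_kpow_R r ltac:(nra))))].
  intros k.
  change (INR k * ((1 + t) * r) ^ k - (1 + t) * (INR k * r ^ k) = INR k * r ^ k * ray_weight t k).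
  unfold ray_weight. rewrite Rpow_mult_distr. ring.
Qed.

Lemma sum_n_2 {G : AbelianMonoid} (u : nat -> G) :
  sum_n u 2 = plus (plus (u 0%nat) (u 1%nat)) (u 2%nat).
Proof. rewrite !sum_Sn, sum_O. reflexivity. Qed.

Definition den_bound (b r : R) : R := 2 * r + 2 * (1 - b) * r ^ 2 - r / (1 - r) ^ 2.
Definition num_bound (b r : R) : R := 2 * b * r ^ 2 + 2 * r ^ 2 / (1 - r) ^ 3 - 2 * r ^ 2.

Section ClassF.

Variables (b : R) (f : C -> C) (a : nat -> C).
Hypothesis Hf : coeffs_Ab b f a.
Hypothesis Ha : forall n, (3 <= n)%nat -> Cmod (a n) <= INR n.

Lemma is_series_coeffs_Ab z : Cmod z < 1 ->
  is_series (K := C_AbsRing) (V := C_NormedModule) (fun k => z ^ k * a k)%C (f z).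
Proof.
  intros Hz. destruct Hf as [_ [_ [_ Hser]]].
  eapply is_series_ext; [|exact (Hser z Hz)]. intros k. simpl. rewrite pow_n_C. reflexivity.
Qed.

Lemma Cmod_F_sub_head_le z : Cmod z < 1 ->
  Cmod (f z - z - a 2%nat * z ^ 2)%C <= kpow_tail (Cmod z).
Proof.
  intros Hz. set (r := Cmod z).
  assert (Hr : 0 <= r < 1) by (split; [apply Cmod_ge_0|exact Hz]).
  pose proof (is_series_tail_norm_le _ _ _ _ 2
    (is_series_coeffs_Ab z Hz) (is_series_kpow_R r Hr)) as Htail.
  destruct Hf as [Ha0 [Ha1 _]].
  assert (Hhead : sum_n (G := NormedModule.AbelianMonoid _ C_NormedModule)
                   (fun k => z ^ k * a k)%C 2 = (z + a 2%nat * z ^ 2)%C).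
  { rewrite sum_n_2, Ha0, Ha1. change plus with Cplus. simpl. ring. }
  assert (Hhead_R : sum_n (fun k => INR k * r ^ k) 2 = r + 2 * r ^ 2).
  { rewrite sum_n_2. change plus with Rplus. simpl. ring. }
  rewrite Hhead, Hhead_R in Htail.
  replace (f z - z - a 2%nat * z ^ 2)%C with (f z - (z + a 2%nat * z ^ 2))%C by ring.
  unfold kpow_tail. replace (r / (1 - r) ^ 2 - r - 2 * r ^ 2)
    with (r / (1 - r) ^ 2 - (r + 2 * r ^ 2)) by ring.
  apply Htail. intros k Hk. change (Cmod (z ^ k * a k)%C <= INR k * r ^ k).
  rewrite Cmod_mult, Cmod_pow, Rmult_comm. fold r.
  apply Rmult_le_compat_r; [apply pow_le; lra|apply Ha; lia].
Qed.

Lemma is_series_F_ray z t : Cmod z < 1 -> 0 <= t -> (1 + t) * Cmod z < 1 ->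
  is_series (K := C_AbsRing) (V := C_NormedModule)
    (fun k => z ^ k * a k * RtoC (ray_weight t k))%C (f (RtoC (1 + t) * z) - RtoC (1 + t) * f z)%C.
Proof.
  intros Hz Ht Htz.
  assert (Hy : Cmod (RtoC (1 + t) * z) < 1) by (rewrite Cmod_mult, Cmod_R, Rabs_pos_eq; lra).
  eapply is_series_ext; [|exact (is_series_minus _ _ _ _ (is_series_coeffs_Ab _ Hy)
                                   (is_series_scal (RtoC (1 + t)) _ _ (is_series_coeffs_Ab z Hz)))].
  intros k.
  change ((RtoC (1 + t) * z) ^ k * a k - RtoC (1 + t) * (z ^ k * a k)
          = z ^ k * a k * RtoC (ray_weight t k))%C.
  unfold ray_weight. rewrite Cpow_mult_l, <- RtoC_pow, RtoC_minus. ring.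
Qed.

Lemma Cmod_F_ray_le z t : Cmod z < 1 -> 0 < t -> (1 + t) * Cmod z < 1 ->
  Cmod (f (RtoC (1 + t) * z) - RtoC (1 + t) * f z)%C <= t * ray_majorant b (Cmod z) t.
Proof.
  intros Hz Ht Htz. set (r := Cmod z) in *.
  assert (Hr : 0 <= r) by apply Cmod_ge_0.
  pose proof (is_series_tail_norm_le _ _ _ _ 2 (is_series_F_ray z t Hz ltac:(lra) Htz)
                (is_series_kpow_ray r t Hr ltac:(lra) Htz)) as Htail.
  destruct Hf as [Ha0 [Ha1 [Ha2 _]]].
  set (head := (a 2%nat * z ^ 2 * RtoC (t + t ^ 2))%C).
  assert (Hw1 : ray_weight t 1 = 0) by (unfold ray_weight; ring).
  assert (Hw2 : ray_weight t 2 = t + t ^ 2) by (unfold ray_weight; ring).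
  assert (Hhead : sum_n (G := NormedModule.AbelianMonoid _ C_NormedModule)
                   (fun k => z ^ k * a k * RtoC (ray_weight t k))%C 2 = head).
  { rewrite sum_n_2, Ha0, Ha1, Hw1, Hw2. change plus with Cplus. unfold head. simpl. ring. }
  assert (Hhead_R : sum_n (fun k => INR k * r ^ k * ray_weight t k) 2 = 2 * r ^ 2 * (t + t ^ 2)).
  { rewrite sum_n_2, Hw1, Hw2. change plus with Rplus. simpl. ring. }
  rewrite Hhead, Hhead_R in Htail.
  assert (Hhead_norm : Cmod head = 2 * b * r ^ 2 * (t + t ^ 2)).
  { unfold head. rewrite !Cmod_mult, Ha2, Cmod_pow, Cmod_R, Rabs_pos_eq by nra. reflexivity. }
  assert (Hrest : Cmod (f (RtoC (1 + t) * z) - RtoC (1 + t) * f z - head)%C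
            <= (1 + t) * r / (1 - (1 + t) * r) ^ 2 - (1 + t) * (r / (1 - r) ^ 2)
               - 2 * r ^ 2 * (t + t ^ 2)).
  { apply Htail. intros k Hk.
    change (Cmod (z ^ k * a k * RtoC (ray_weight t k))%C <= INR k * r ^ k * ray_weight t k).
    pose proof (ray_weight_nonneg t k ltac:(lra) ltac:(lia)) as Hw.
    rewrite !Cmod_mult, Cmod_pow, Cmod_R, Rabs_pos_eq by exact Hw. fold r.
    apply Rmult_le_compat_r; [exact Hw|].
    rewrite Rmult_comm. apply Rmult_le_compat_r; [apply pow_le; lra|apply Ha; lia]. }
  replace (f (RtoC (1 + t) * z) - RtoC (1 + t) * f z)%C
    with (head + (f (RtoC (1 + t) * z) - RtoC (1 + t) * f z - head))%C by ring.
  eapply Rle_trans; [apply Cmod_triangle|]. rewrite Hhead_norm.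
  replace (t * ray_majorant b r t) with (2 * b * r ^ 2 * (t + t ^ 2) +
    ((1 + t) * r / (1 - (1 + t) * r) ^ 2 - (1 + t) * (r / (1 - r) ^ 2) - 2 * r ^ 2 * (t + t ^ 2))).
  - lra.
  - unfold ray_majorant. field. split; lra.
Qed.

Lemma den_bound_le_Cmod_F z : Cmod z < 1 -> den_bound b (Cmod z) <= Cmod (f z).
Proof.
  intros Hz. pose proof (Cmod_F_sub_head_le z Hz) as Htail.
  destruct Hf as [_ [_ [Ha2 _]]].
  assert (Hhead : Cmod (a 2%nat * z ^ 2)%C = 2 * b * Cmod z ^ 2)
    by (rewrite Cmod_mult, Ha2, Cmod_pow; reflexivity).
  assert (Htri : Cmod z <= Cmod (f z) + Cmod (a 2%nat * z ^ 2)%C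
                            + Cmod (f z - z - a 2%nat * z ^ 2)%C).
  { replace z with (f z - a 2%nat * z ^ 2 - (f z - z - a 2%nat * z ^ 2))%C at 1 by ring.
    unfold Cminus. eapply Rle_trans; [apply Cmod_triangle|]. rewrite Cmod_opp.
    apply Rplus_le_compat_r. eapply Rle_trans; [apply Cmod_triangle|]. rewrite Cmod_opp. lra. }
  assert (Hden : den_bound b (Cmod z) = Cmod z - 2 * b * Cmod z ^ 2 - kpow_tail (Cmod z))
    by (unfold den_bound, kpow_tail; ring).
  lra.
Qed.

Lemma Cmod_zderive_sub_F_le z d : 0 < Cmod z < 1 ->
  is_derive (K := C_AbsRing) (V := C_NormedModule) f z d ->
  Cmod (z * d - f z)%C <= num_bound b (Cmod z).
Proof.
  intros Hz Hd. set (r := Cmod z) in *.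
  replace (num_bound b r) with (ray_majorant b r 0)
    by (unfold num_bound, ray_majorant; field; lra).
  apply (Cmod_derive_ray_le f z d (ray_majorant b r) ((1 - r) / r)).
  - apply Rdiv_lt_0_compat; lra.
  - exact Hd.
  - unfold ray_majorant. reg.
    apply Rmult_integral_contrapositive. split; apply pow_nonzero; lra.
  - intros t Ht. apply Cmod_F_ray_le; [exact (proj2 Hz)|lra|].
    destruct Ht as [_ Ht]. fold r.
    apply (Rmult_lt_compat_r r) in Ht; [|lra].
    replace ((1 - r) / r * r) with (1 - r) in Ht by (field; lra). lra.
Qed.

End ClassF.

Definition r0_poly (b alpha x : R) : R :=
  1 - alpha + (1 + alpha) * x - 2 * (1 - alpha + (2 - alpha) * (1 - b) * x) * (1 - x) ^ 3.

Lemma r0_poly_eq_0 b alpha rho : r0_eq b alpha rho -> r0_poly b alpha rho = 0.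
Proof. unfold r0_eq, r0_poly. intros Heq. lra. Qed.

Lemma r0_poly_increasing b alpha r s : 0 <= b <= 1 -> 0 <= alpha < 1 ->
  0 <= r -> r < s -> s <= 1 -> r0_poly b alpha r < r0_poly b alpha s.
Proof.
  intros Hb Ha Hr Hrs Hs.
  set (c := (2 - alpha) * (1 - b)).
  set (dp x := 1 + alpha + (1 - x) ^ 2 * (6 * (1 - alpha) + 6 * c - 8 * c * (1 - x))).
  assert (Hderiv : forall x, derivable_pt_lim (r0_poly b alpha) x (dp x)).
  { intros x. apply is_derive_Reals. unfold r0_poly, dp, c. auto_derive; [exact I|ring]. }
  assert (Hdp : forall x, r <= x <= s -> 0 < dp x).
  { intros x Hx. unfold dp.
    assert (Hc : 0 <= c <= 2 - alpha) by (unfold c; split; nra).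
    set (y := 1 - x). assert (Hy : 0 <= y <= 1) by (unfold y; lra).
    assert (Hy2 : 0 <= y ^ 2 <= 1) by (simpl; split; nra).
    assert (Hcy : c * y <= c) by nra.
    assert (Hlow : y ^ 2 * (2 - 4 * alpha) <= y ^ 2 * (6 * (1 - alpha) + 6 * c - 8 * c * y))
      by (apply Rmult_le_compat_l; lra).
    destruct (Rle_dec 0 (2 - 4 * alpha)); nra. }
  destruct (MVT_cor2 (r0_poly b alpha) dp r s Hrs (fun x _ => Hderiv x)) as [x [Hmvt Hx]].
  pose proof (Hdp x ltac:(lra)). nra.
Qed.

Lemma num_bound_sub_den_bound b alpha r : r <> 1 ->
  num_bound b r - (1 - alpha) * den_bound b r = r * r0_poly b alpha r / (1 - r) ^ 3.
Proof. intros Hr. unfold num_bound, den_bound, r0_poly. field. lra. Qed.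

Lemma num_bound_pos b r : 0 <= b -> 0 < r < 1 -> 0 < num_bound b r.
Proof.
  intros Hb Hr. unfold num_bound.
  assert (Hcube : 0 < (1 - r) ^ 3 < 1)
    by (split; [apply pow_lt; lra|apply pow_lt_1_compat; [lra|lia]]).
  assert (Hinv : 1 < / (1 - r) ^ 3).
  { rewrite <- Rinv_1. apply Rinv_lt_contravar; lra. }
  unfold Rdiv. assert (0 < r ^ 2) by (simpl; nra). nra.
Qed.

Lemma num_bound_le_den_bound b alpha rho r : 0 <= b <= 1 -> 0 <= alpha < 1 ->
  0 < rho < 1 -> r0_eq b alpha rho -> 0 < r <= rho ->
  0 < den_bound b r /\ num_bound b r <= (1 - alpha) * den_bound b r /\
  (r < rho -> num_bound b r < (1 - alpha) * den_bound b r).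
Proof.
  intros Hb Ha Hrho Heq Hr.
  pose proof (r0_poly_eq_0 b alpha rho Heq) as Hroot.
  assert (Hfactor : 0 < r / (1 - r) ^ 3) by (apply Rdiv_lt_0_compat; [lra|apply pow_lt; lra]).
  pose proof (num_bound_sub_den_bound b alpha r ltac:(lra)) as Hdiff.
  replace (r * r0_poly b alpha r / (1 - r) ^ 3)
    with (r / (1 - r) ^ 3 * r0_poly b alpha r) in Hdiff by (field; lra).
  assert (Hlt : r < rho -> num_bound b r < (1 - alpha) * den_bound b r).
  { intros Hlt. pose proof (r0_poly_increasing b alpha r rho Hb Ha ltac:(lra) Hlt ltac:(lra)).
    nra. }
  assert (Hle : num_bound b r <= (1 - alpha) * den_bound b r).
  { destruct (Rle_lt_or_eq_dec r rho (proj2 Hr)) as [Hrr|Hrr]; [apply Rlt_le, Hlt, Hrr|].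
    subst r. rewrite Hroot in Hdiff. lra. }
  pose proof (num_bound_pos b r (proj1 Hb) ltac:(lra)) as Hnum.
  repeat split; [|exact Hle|exact Hlt]. nra.
Qed.

(* Coquelicot's differentiation rules are stated for [C] as a normed module over itself,
   a structure distinct from the [C_NormedModule] used in [is_pseries] and [in_F]. *)
Local Notation is_derive_C :=
  (is_derive (K := C_AbsRing) (V := AbsRing_NormedModule C_AbsRing)).

Lemma is_derive_C_NormedModule (f : C -> C) x l :
  is_derive_C f x l -> is_derive (K := C_AbsRing) (V := C_NormedModule) f x l.
Proof. intros [_ H]. split; [apply is_linear_scal_l|exact H]. Qed.

Lemma is_derive_Cinv (x : C) : x <> 0%C -> is_derive_C Cinv x (- / (x * x))%C.
Proof.
  intros Hx. split; [apply is_linear_scal_l|].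
  intros x' Hx'.
  apply (is_filter_lim_locally_unique (K := C_AbsRing) (V := AbsRing_NormedModule C_AbsRing))
    in Hx'. subst x'.
  intros eps. set (m := Cmod x).
  assert (Hm : 0 < m) by (apply Cmod_gt_0; exact Hx).
  assert (Hdel : 0 < Rmin (m / 2) (eps * m ^ 3 / 2)).
  { apply Rmin_pos; [lra|]. apply Rdiv_lt_0_compat; [|lra].
    apply Rmult_lt_0_compat; [apply cond_pos|apply pow_lt; lra]. }
  exists (mkposreal _ Hdel). intros y Hy.
  apply AbsRing_norm_compat2 in Hy. simpl in Hy. rewrite Rmult_1_l in Hy.
  change (abs (minus y x)) with (Cmod (y - x)) in Hy.
  change (Cmod (/ y - / x - (y - x) * (- / (x * x)))%C <= eps * Cmod (y - x)).
  set (u := Cmod (y - x)) in *.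
  assert (Hu : 0 <= u) by apply Cmod_ge_0.
  assert (Hu1 := Rlt_le_trans _ _ _ Hy (Rmin_l _ _)).
  assert (Hu2 := Rlt_le_trans _ _ _ Hy (Rmin_r _ _)).
  assert (Hyx : m / 2 <= Cmod y).
  { pose proof (Cmod_triangle (x - y) y) as Htri.
    replace (x - y + y)%C with x in Htri by ring.
    replace (x - y)%C with (- (y - x))%C in Htri by ring. rewrite Cmod_opp in Htri.
    fold m u in Htri. lra. }
  assert (Hy0 : (y : C) <> 0%C) by (intros E; rewrite E, Cmod_0 in Hyx; lra).
  replace (/ y - / x - (y - x) * (- / (x * x)))%C with ((y - x) * (y - x) / (x * x * y))%C
    by (field; split; assumption).
  rewrite Cmod_div by (repeat apply Cmult_neq_0; assumption).
  rewrite !Cmod_mult. fold m u.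
  assert (Hmmy : m ^ 3 / 2 <= m * m * Cmod y).
  { replace (m ^ 3 / 2) with (m * m * (m / 2)) by (simpl; field).
    apply Rmult_le_compat_l; [nra|exact Hyx]. }
  assert (Heps : 0 < eps) by apply cond_pos.
  assert (Hden : 0 < m * m * Cmod y) by (apply Rmult_lt_0_compat; [nra|lra]).
  set (X := m * m * Cmod y) in *.
  assert (HuX : u <= eps * X).
  { assert (eps * (m ^ 3 / 2) <= eps * X) by (apply Rmult_le_compat_l; lra).
    simpl in *. lra. }
  apply Rle_div_l; [exact Hden|]. nra.
Qed.

Section ComplexDerivativeRules.

Variables (f g : C -> C) (z df dg : C).
Hypotheses (Hf : is_derive_C f z df) (Hg : is_derive_C g z dg).

Lemma is_derive_C_plus : is_derive_C (fun t => f t + g t)%C z (df + dg)%C.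
Proof. exact (is_derive_plus _ _ _ _ _ Hf Hg). Qed.

Lemma is_derive_C_minus : is_derive_C (fun t => f t - g t)%C z (df - dg)%C.
Proof. exact (is_derive_minus _ _ _ _ _ Hf Hg). Qed.

Lemma is_derive_C_mult : is_derive_C (fun t => f t * g t)%C z (df * g z + f z * dg)%C.
Proof. exact (is_derive_mult (K := C_AbsRing) f g z df dg Hf Hg Cmult_comm). Qed.

End ComplexDerivativeRules.

Lemma is_derive_C_comp (f g : C -> C) (z df dg : C) :
  is_derive_C f (g z) df -> is_derive_C g z dg -> is_derive_C (fun t => f (g t)) z (dg * df)%C.
Proof. exact (is_derive_comp (V := AbsRing_NormedModule C_AbsRing) f g z df dg). Qed.

Lemma is_derive_C_id (z : C) : is_derive_C (fun t => t) z (RtoC 1).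
Proof. exact (is_derive_id (K := C_AbsRing) z). Qed.

Lemma is_derive_C_const (c z : C) : is_derive_C (fun _ => c) z (RtoC 0).
Proof. exact (is_derive_const (K := C_AbsRing) (V := AbsRing_NormedModule C_AbsRing) c z). Qed.

Lemma is_derive_f0 b (z : C) : z <> 1%C ->
  is_derive_C (f0 b) z (2 + 4 * (1 - b) * z - (1 + z) / ((1 - z) * (1 - z) * (1 - z)))%C.
Proof.
  intros Hz.
  assert (H1z : (1 - z)%C <> 0%C) by (intros E; apply Hz; rewrite <- (Cplus_0_r z), <- E; ring).
  apply (is_derive_ext (K := C_AbsRing) (V := AbsRing_NormedModule C_AbsRing)
           (fun t => 2 * t + 2 * (1 - b) * t * t - t * / ((1 - t) * (1 - t)))%C);
    [reflexivity|].
  eapply (eq_ind _ (is_derive_C _ z)).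
  - apply is_derive_C_minus; [apply is_derive_C_plus|apply is_derive_C_mult].
    + apply is_derive_C_mult; [apply is_derive_C_const|apply is_derive_C_id].
    + apply is_derive_C_mult; [apply is_derive_C_mult|]; 
        [apply is_derive_C_const|apply is_derive_C_id|apply is_derive_C_id].
    + apply is_derive_C_id.
    + apply (is_derive_C_comp Cinv (fun t => (1 - t) * (1 - t))%C).
      * apply is_derive_Cinv. apply Cmult_neq_0; exact H1z.
      * apply is_derive_C_mult; apply is_derive_C_minus;
          [apply is_derive_C_const|apply is_derive_C_id
          |apply is_derive_C_const|apply is_derive_C_id].
  - cbv beta. match goal with |- ?l = ?r => change (@eq C l r) end. field. exact H1z.
Qed.

Lemma f0_RtoC b x : x <> 1 -> f0 b (RtoC x) = RtoC (den_bound b x).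
Proof. intros Hx. unfold f0, den_bound. apply injective_projections; simpl; field; lra. Qed.

Lemma is_derive_f0_RtoC b x : x <> 1 ->
  is_derive (K := C_AbsRing) (V := C_NormedModule) (f0 b) (RtoC x)
    (RtoC (2 + 4 * (1 - b) * x - (1 + x) / (1 - x) ^ 3)).
Proof.
  intros Hx. apply is_derive_C_NormedModule.
  assert (Hz : RtoC x <> 1%C) by (intros E; apply RtoC_inj in E; lra).
  replace (RtoC (2 + 4 * (1 - b) * x - (1 + x) / (1 - x) ^ 3))
    with (2 + 4 * (1 - b) * x - (1 + x) / ((1 - x) * (1 - x) * (1 - x)))%C
    by (apply injective_projections; simpl; field; lra).
  exact (is_derive_f0 b x Hz).
Qed.

Lemma f0_logquot_RtoC b x d : 0 < x < 1 -> den_bound b x <> 0 ->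
  is_derive (K := C_AbsRing) (V := C_NormedModule) (f0 b) (RtoC x) d ->
  (RtoC x * d / f0 b (RtoC x))%C = RtoC (1 - num_bound b x / den_bound b x).
Proof.
  intros Hx Hden Hd.
  assert (Hx1 : x <> 1) by lra.
  rewrite <- (is_C_derive_unique _ _ _ Hd), (is_C_derive_unique _ _ _ (is_derive_f0_RtoC b x Hx1)).
  rewrite f0_RtoC by exact Hx1.
  rewrite <- RtoC_mult, <- RtoC_div by exact Hden. f_equal.
  unfold num_bound, den_bound in *. field.
  split; [lra|]. intros E. apply Hden.
  apply (Rmult_eq_reg_r ((1 - x) ^ 2)); [|apply pow_nonzero; lra].
  rewrite Rmult_0_l, <- E. field. lra.
Qed.

Definition f0_coeff (b : R) (k : nat) : C :=
  RtoC (match k with 1%nat => 1 | 2%nat => - (2 * b) | _ => - INR k end).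

Lemma f0_in_F b : 0 <= b <= 1 -> in_F b (f0 b).
Proof.
  intros Hb. exists (f0_coeff b). split; [split; [|split; [|split]]|].
  - unfold f0_coeff. simpl. rewrite Ropp_0. reflexivity.
  - reflexivity.
  - unfold f0_coeff. rewrite Cmod_R, Rabs_Ropp, Rabs_pos_eq; lra.
  - intros z Hz. unfold is_pseries.
    set (e k := (f0_coeff b k + INR k)%C).
    assert (He : is_series (K := C_AbsRing) (V := C_NormedModule) (fun k => z ^ k * e k)%C
                   (2 * z + 2 * (1 - b) * z ^ 2)%C).
    { replace (2 * z + 2 * (1 - b) * z ^ 2)%C
        with (sum_n (G := NormedModule.AbelianMonoid _ C_NormedModule) (fun k => z ^ k * e k)%C 2).
      - apply is_series_finite. intros k Hk.
        destruct k as [|[|[|k]]]; try lia. unfold e, f0_coeff.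
        rewrite <- RtoC_plus, Rplus_opp_l. apply Cmult_0_r.
      - rewrite sum_n_2. change plus with Cplus. unfold e, f0_coeff.
        apply injective_projections; simpl; ring. }
    replace (f0 b z) with (- (z / ((1 - z) * (1 - z))) + (2 * z + 2 * (1 - b) * z ^ 2))%C
      by (unfold f0; simpl; ring).
    eapply is_series_ext;
      [|exact (is_series_plus _ _ _ _ (is_series_opp _ _ (is_series_kpow_C z Hz)) He)].
    intros k. change (- (z ^ k * INR k) + z ^ k * e k = scal (pow_n z k) (f0_coeff b k))%C.
    change scal with Cmult. replace (pow_n z k) with (z ^ k)%C by (symmetry; apply pow_n_C).
    unfold e. ring.
  - intros n Hn. destruct n as [|[|[|n]]]; try lia. unfold f0_coeff.
    rewrite Cmod_R, Rabs_Ropp, Rabs_pos_eq by apply pos_INR. lra.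
Qed.

Lemma Re_ge_1_sub_Cmod_sub1 (w : C) : 1 - Cmod (w - 1)%C <= Re w.
Proof.
  pose proof (re_le_Cmod (w - 1)%C) as H. apply Rabs_le_between' in H.
  destruct w as [p q]. simpl in *. lra.
Qed.

Section RadiusF.

Variables (b alpha rho : R).
Hypotheses (Hb : 0 <= b <= 1) (Ha : 0 <= alpha < 1) (Hrho : 0 < rho < 1)
  (Heq : r0_eq b alpha rho).

Lemma in_F_nonzero f z : in_F b f -> 0 < Cmod z <= rho -> f z <> 0%C.
Proof.
  intros [a [Hf Ha_n]] Hz Hfz.
  pose proof (den_bound_le_Cmod_F b f a Hf Ha_n z ltac:(lra)) as Hden.
  pose proof (num_bound_le_den_bound b alpha rho (Cmod z) Hb Ha Hrho Heq Hz) as [Hpos _].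
  rewrite Hfz, Cmod_0 in Hden. lra.
Qed.

Lemma in_F_logquot_sub1_le f z d w : in_F b f -> Cmod z <= rho ->
  is_derive (K := C_AbsRing) (V := C_NormedModule) f z d -> logquot f z d w ->
  Cmod (w - 1)%C <= 1 - alpha /\ (Cmod z < rho -> Cmod (w - 1)%C < 1 - alpha).
Proof.
  intros HF Hz Hd [[_ ->] | [Hz0 ->]].
  { replace (RtoC 1 - RtoC 1)%C with (RtoC 0) by ring. rewrite Cmod_0. split; intros; lra. }
  pose proof (proj1 (Cmod_gt_0 z) Hz0) as Hzpos. destruct HF as [a [Hf Ha_n]].
  pose proof (den_bound_le_Cmod_F b f a Hf Ha_n z ltac:(lra)) as Hden.
  pose proof (Cmod_zderive_sub_F_le b f a Hf Ha_n z d ltac:(lra) Hd) as Hnum.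
  destruct (num_bound_le_den_bound b alpha rho (Cmod z) Hb Ha Hrho Heq ltac:(lra))
    as [Hpos [Hle Hlt]].
  assert (Hfz : 0 < Cmod (f z)) by lra.
  assert (Hf0 : f z <> 0%C) by (intros E; rewrite E, Cmod_0 in Hfz; lra).
  replace (z * d / f z - 1)%C with ((z * d - f z) / f z)%C by (field; exact Hf0).
  rewrite Cmod_div by exact Hf0.
  assert (Hscale : (1 - alpha) * den_bound b (Cmod z) <= (1 - alpha) * Cmod (f z))
    by (apply Rmult_le_compat_l; lra).
  split.
  - apply Rle_div_l; [exact Hfz|]. lra.
  - intros Hzr. apply Rlt_div_l; [exact Hfz|]. specialize (Hlt Hzr). lra.
Qed.

Lemma f0_logquot_root_eq d : is_derive (K := C_AbsRing) (V := C_NormedModule) (f0 b) (RtoC rho) d ->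
  (RtoC rho * d / f0 b (RtoC rho))%C = RtoC alpha.
Proof.
  intros Hd.
  destruct (num_bound_le_den_bound b alpha rho rho Hb Ha Hrho Heq ltac:(lra)) as [Hden _].
  rewrite (f0_logquot_RtoC b rho d Hrho ltac:(lra) Hd). f_equal.
  assert (Hroot : num_bound b rho = (1 - alpha) * den_bound b rho).
  { pose proof (num_bound_sub_den_bound b alpha rho ltac:(lra)) as Hdiff.
    rewrite (r0_poly_eq_0 b alpha rho Heq), Rmult_0_r, Rdiv_0_l in Hdiff. lra. }
  rewrite Hroot. field. lra.
Qed.

Lemma f0_logquot_root : exists d,
  is_derive (K := C_AbsRing) (V := C_NormedModule) (f0 b) (RtoC rho) d /\
  logquot (f0 b) (RtoC rho) d (RtoC alpha).
Proof.
  pose proof (is_derive_f0_RtoC b rho ltac:(lra)) as Hd.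
  eexists. split; [exact Hd|]. right. split.
  - intros E. apply RtoC_inj in E. lra.
  - symmetry. exact (f0_logquot_root_eq _ Hd).
Qed.

Lemma starlike_order_on_root : starlike_order_on b alpha rho.
Proof.
  intros f HF. split.
  - intros z Hz. apply in_F_nonzero; [exact HF|lra].
  - intros z d w Hz Hd Hw.
    destruct (in_F_logquot_sub1_le f z d w HF ltac:(lra) Hd Hw) as [_ Hlt].
    pose proof (Re_ge_1_sub_Cmod_sub1 w). specialize (Hlt Hz). lra.
Qed.

Lemma not_starlike_order_on r : rho < r -> ~ starlike_order_on b alpha r.
Proof.
  intros Hr Hst. destruct f0_logquot_root as [d [Hd Hw]].
  destruct (Hst (f0 b) (f0_in_F b Hb)) as [_ Hre].
  specialize (Hre (RtoC rho) d (RtoC alpha) ltac:(rewrite Cmod_R, Rabs_pos_eq; lra) Hd Hw).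
  simpl in Hre. lra.
Qed.

End RadiusF.

Lemma parabolic_on_root b rho : 0 <= b <= 1 -> 0 < rho < 1 -> r0_eq b (1 / 2) rho ->
  parabolic_on b rho.
Proof.
  intros Hb Hrho Heq f HF z d w Hz Hd Hw.
  destruct (in_F_logquot_sub1_le b (1 / 2) rho Hb ltac:(lra) Hrho Heq f z d w HF
              ltac:(lra) Hd Hw) as [_ Hlt].
  pose proof (Re_ge_1_sub_Cmod_sub1 w). specialize (Hlt Hz). lra.
Qed.

Lemma not_parabolic_on b rho : 0 <= b <= 1 -> 0 < rho < 1 -> r0_eq b (1 / 2) rho ->
  forall r, rho < r -> ~ parabolic_on b r.
Proof.
  intros Hb Hrho Heq r Hr Hpar.
  destruct (f0_logquot_root b (1 / 2) rho Hb ltac:(lra) Hrho Heq) as [d [Hd Hw]].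
  specialize (Hpar (f0 b) (f0_in_F b Hb) (RtoC rho) d (RtoC (1 / 2))
                ltac:(rewrite Cmod_R, Rabs_pos_eq; lra) Hd Hw).
  rewrite <- RtoC_minus, Cmod_R, Rabs_left1 in Hpar by lra. simpl in Hpar. lra.
Qed.

Lemma is_lub_threshold (P : R -> Prop) rho : 0 < rho <= 1 -> P rho ->
  (forall r, rho < r -> ~ P r) -> is_lub (fun r => 0 < r <= 1 /\ P r) rho.
Proof.
  intros Hrho HP Hbeyond. split.
  - intros r [_ Hr]. apply Rnot_lt_le. intros Hlt. exact (Hbeyond r Hlt Hr).
  - intros u Hu. apply Hu. split; assumption.
Qed.

Theorem theorem2p1 (b alpha r0 : R)
  (hb : 0 <= b <= 1) (ha : 0 <= alpha < 1)
  (hr0 : 0 < r0 < 1) (heq : r0_eq b alpha r0) :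
  (* (i) *)
  (forall f, in_F b f ->
     forall z d w : C, Cmod z <= r0 ->
       is_derive (K:=C_AbsRing) (V:=C_NormedModule) f z d ->
       logquot f z d w -> Cmod (w - 1)%C <= 1 - alpha) /\
  (* (ii) *)
  radius_starlike b alpha r0 /\
  (* (iii) *)
  (forall r1 : R, 0 < r1 < 1 -> r0_eq b (1/2) r1 -> radius_parabolic b r1) /\
  (* sharpness *)
  (in_F b (f0 b) /\
   forall d : C, is_derive (K:=C_AbsRing) (V:=C_NormedModule) (f0 b) (RtoC r0) d ->
     Cmod (RtoC r0 * d / f0 b (RtoC r0) - 1)%C = 1 - alpha /\
     Re (RtoC r0 * d / f0 b (RtoC r0))%C = alpha).
Proof.
  split; [|split; [|split]].
  - intros f HF z d w Hz Hd Hw.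
    exact (proj1 (in_F_logquot_sub1_le b alpha r0 hb ha hr0 heq f z d w HF Hz Hd Hw)).
  - apply is_lub_threshold; [lra|exact (starlike_order_on_root b alpha r0 hb ha hr0 heq)|].
    exact (not_starlike_order_on b alpha r0 hb ha hr0 heq).
  - intros r1 Hr1 Heq1. apply is_lub_threshold; [lra|exact (parabolic_on_root b r1 hb Hr1 Heq1)|].
    exact (not_parabolic_on b r1 hb Hr1 Heq1).
  - split; [exact (f0_in_F b hb)|]. intros d Hd.
    rewrite (f0_logquot_root_eq b alpha r0 hb ha hr0 heq d Hd).
    split; [rewrite <- RtoC_minus, Cmod_R, Rabs_left1; lra|reflexivity].
Qed.
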